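(* Consider the ride-hailing model in the context and a demand vector $\bm b^C$ with $0\le b^C_i\le b_i$. Suppose $\mathcal{CV}(\bm b^C)$ has an optimal solution whose Lagrange multipliers (waiting times) $\bm w^C$ of the capacity constraints satisfy $\bm w^C=\bm 0$. Then hiding demand from CVs is never profitable: for every $\bm b'$ with $0\le b'_i\le b^C_i$ for all $i$, $\pi(\bm b')\le\pi(\bm b^C)$.
   Context: Model. There are $L$ regions $\{1,\dots,L\}$. For regions $i,j$, $b_{ij}\ge0$ is the customer rate from $i$ to $j$; $b_i=\sum_j b_{ij}$ (assumed $>0$), $q_{ij}=b_{ij}/b_i$. Travel times satisfy $t_{ij}>0$ for $i\ne j$, $t_{ii}=0$. Constants: $p>0$, $c\ge0$, $R\in(0,1)$, CV fleet mass $N>0$. For $i,\alpha$: $\tau^{dr}_{i\alpha}=t_{i\alpha}+\sum_j q_{\alpha j}t_{\alpha j}$, $r^C_{i\alpha}=p(1-R)\sum_j q_{\alpha j}t_{\alpha j}-c\tau^{dr}_{i\alpha}$, $r^{C2P}_{i\alpha}=pR\sum_j q_{\alpha j}t_{\alpha j}$. A matrix $\bm x\in\mathbb R^{L\times L}_{\ge0}$ satisfies flow balance if $\sum_j(\sum_k x_{kj})q_{ji}=\sum_\alpha x_{i\alpha}$ for all $i$. $\mathcal{CV}(\bm b^C)$: maximize $N\log\sum_{i,\alpha}r^C_{i\alpha}x_{i\alpha}-\sum_{i,\alpha}\tau^{dr}_{i\alpha}x_{i\alpha}$ over $\bm x\ge0$ satisfying flow balance and $\sum_j x_{ji}\le b^C_i$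 for all $i$. $\pi(\bm b^C)=\sum_{i,\alpha}r^{C2P}_{i\alpha}x_{i\alpha}$ for an optimal solution $\bm x$ of $\mathcal{CV}(\bm b^C)$ (the value is the same for all optimal solutions). *)

From HB Require Import structures.
From mathcomp Require Import all_boot all_order all_algebra.
From mathcomp Require Import all_classical all_reals all_analysis.
Set Implicit Arguments. Unset Strict Implicit. Unset Printing Implicit Defensive.
Import Order.TTheory GRing.Theory Num.Theory.
Local Open Scope ring_scope.

Section RideHailing.
Variables (R : realType) (L : nat).
Variables (b t : 'I_L -> 'I_L -> R).
Variables (p c Rr N : R).

Definition brate (i : 'I_L) : R := \sum_(j < L) b i j.
Definition qprob (i j : 'I_L) : R := b i j / brate i.
Definition trip (a : 'I_L) : R := \sum_(j < L) qprob a j * t a j.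
Definition tau_dr (i a : 'I_L) : R := t i a + trip a.
Definition rC (i a : 'I_L) : R := p * (1 - Rr) * trip a - c * tau_dr i a.
Definition rC2P (i a : 'I_L) : R := p * Rr * trip a.

Definition flow_balance (x : 'I_L -> 'I_L -> R) : Prop :=
  forall i : 'I_L,
    \sum_(j < L) (\sum_(k < L) x k j) * qprob j i = \sum_(a < L) x i a.

Definition CV_feasible (bC : 'I_L -> R) (x : 'I_L -> 'I_L -> R) : Prop :=
  [/\ forall i a, 0 <= x i a, flow_balance x &
      forall i : 'I_L, \sum_(j < L) x j i <= bC i].

Definition CV_rev (x : 'I_L -> 'I_L -> R) : R :=
  \sum_(i < L) \sum_(a < L) rC i a * x i a.
Definition CV_time (x : 'I_L -> 'I_L -> R) : R :=
  \sum_(i < L) \sum_(a < L) tau_dr i a * x i a.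
Definition CV_obj (x : 'I_L -> 'I_L -> R) : R := N * ln (CV_rev x) - CV_time x.

(* x is an optimal solution of CV(bC): the log term must be finite (argument
   > 0), and x beats every feasible point with finite objective. *)
Definition CV_optimal (bC : 'I_L -> R) (x : 'I_L -> 'I_L -> R) : Prop :=
  [/\ CV_feasible bC x, 0 < CV_rev x &
      forall y, CV_feasible bC y -> 0 < CV_rev y -> CV_obj y <= CV_obj x].

Definition pi_val (x : 'I_L -> 'I_L -> R) : R :=
  \sum_(i < L) \sum_(a < L) rC2P i a * x i a.

(* w is a vector of Lagrange (KKT) multipliers of the capacity constraints
   sum_j x_ji <= bC_i at x: there are multipliers lam (free) for the flow
   balance constraints and mu >= 0 for x >= 0 such that stationarity of the
   Lagrangian and complementary slackness hold. *)
Definition capacity_multipliers (bC : 'I_L -> R) (x : 'I_L -> 'I_L -> R)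
    (w : 'I_L -> R) : Prop :=
  exists (lam : 'I_L -> R) (mu : 'I_L -> 'I_L -> R),
    [/\ forall i a, 0 <= mu i a,
        forall i a, mu i a * x i a = 0,
        forall i, 0 <= w i,
        forall i, w i * (\sum_(j < L) x j i - bC i) = 0 &
        forall i a,
          N * rC i a / CV_rev x - tau_dr i a - w a
          + \sum_(k < L) lam k * (qprob a k - (k == i)%:R) + mu i a = 0].

End RideHailing.

From HB Require Import structures.
From mathcomp Require Import all_boot all_order all_algebra.
From mathcomp Require Import all_classical all_reals all_analysis.
From mathcomp Require Import ring lra.
Import Order.TTheory GRing.Theory Num.Theory.
Local Open Scope ring_scope.

(* Summing the KKT stationarity conditions against a flow-balanced [y] kills
   the flow-balance multipliers; with zero capacity multipliers this gives
   [N * rev y <= rev x0 * time y] for every such [y >= 0], with equality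
   [time x0 = N] at the KKT point [x0]: [x0] maximises revenue per unit of
   time even without capacity constraints.  Along a ray, the objective
   [N ln (rev y) - time y] can only be optimal when [time y = N] (or, if
   only shrinking is feasible, [time y <= N]), because [ln u <= u - 1] with
   equality only at [u = 1].  Hence an optimum [x] of CV(bC) has
   [time x = N] and [rev x >= rev x0], while an optimum [x'] of CV(b') has
   [time x' <= N], so [rev x' <= rev x0].  The CV revenue is
   [p (1 - R) trip - c time] and pi is [p R trip], so the total trip length,
   and with it pi, is larger at [x]. *)

Lemma ln_ge_subr1_eq1 (R : realType) (u : R) : 0 < u -> u - 1 <= ln u -> u = 1.
Proof.
move=> u_gt0 le_u; apply/eqP; apply: contraTT le_u => u_neq1.
have lnu_neq0 : ln u != 0 by rewrite ln_eq0.
by rewrite -ltNge ltrBrDr addrC -{2}(lnK u_gt0) ?expR_gt1Dx.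
Qed.

Lemma eq_of_subr_le_mul_lnB {R : realType} {N T : R} : 0 < N -> 0 < T ->
  T - N <= N * (ln T - ln N) -> T = N.
Proof.
move=> N_gt0 T_gt0 le_TN.
have TN_gt0 : 0 < T / N by exact: divr_gt0.
suff TN1 : T / N = 1 by rewrite -(divfK (lt0r_neq0 N_gt0) T) TN1 mul1r.
apply: ln_ge_subr1_eq1 => //; rewrite ln_div ?posrE //.
by rewrite -(ler_pM2l N_gt0) mulrBr mulr1 mulrCA divff ?gt_eqF // mulr1.
Qed.

Lemma sum2_scale (R : comPzRingType) (L : nat) (f x : 'I_L -> 'I_L -> R) k :
  \sum_(i < L) \sum_(a < L) f i a * (k * x i a)
    = k * \sum_(i < L) \sum_(a < L) f i a * x i a.
Proof.
rewrite mulr_sumr; apply: eq_bigr => i _; rewrite mulr_sumr.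
by apply: eq_bigr => a _; rewrite mulrCA.
Qed.

Section CVModel.
Context {R : realType} {L : nat} {b t : 'I_L -> 'I_L -> R} {p c Rr N : R}.

Local Notation rev := (CV_rev b t p c Rr).
Local Notation time := (CV_time b t).

Lemma CV_rev_scale k x : rev (fun i a => k * x i a) = k * rev x.
Proof. exact: sum2_scale. Qed.

Lemma CV_time_scale k x : time (fun i a => k * x i a) = k * time x.
Proof. exact: sum2_scale. Qed.

Lemma flow_balance_scale k x :
  flow_balance b x -> flow_balance b (fun i a => k * x i a).
Proof.
move=> fb_x i; rewrite -mulr_sumr -fb_x mulr_sumr; apply: eq_bigr => j _.
by rewrite -mulr_sumr mulrA.
Qed.

Lemma CV_feasible_scale bC k x : 0 <= k <= 1 ->
  CV_feasible b bC x -> CV_feasible b bC (fun i a => k * x i a).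
Proof.
case/andP=> k_ge0 k_le1 [x_ge0 fb_x cap_x]; split.
- by move=> i a; rewrite mulr_ge0.
- exact: flow_balance_scale.
- move=> i; apply: le_trans (cap_x i); rewrite -mulr_sumr.
  by rewrite ler_piMl // sumr_ge0.
Qed.

Definition trip_sum (x : 'I_L -> 'I_L -> R) : R :=
  \sum_(i < L) \sum_(a < L) trip b t a * x i a.

Lemma CV_rev_trip_time x : rev x = p * (1 - Rr) * trip_sum x - c * time x.
Proof.
rewrite /CV_rev /CV_time /trip_sum !mulr_sumr -sumrB; apply: eq_bigr => i _.
rewrite !mulr_sumr -sumrB; apply: eq_bigr => a _; rewrite /rC; ring.
Qed.

Lemma pi_val_trip x : pi_val b t p Rr x = p * Rr * trip_sum x.
Proof.
rewrite /pi_val /trip_sum !mulr_sumr; apply: eq_bigr => i _.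
by rewrite !mulr_sumr; apply: eq_bigr => a _; rewrite /rC2P mulrA.
Qed.

Lemma pi_val_le {x' x} : 0 < p -> 0 < Rr < 1 -> 0 <= c ->
  time x' <= time x -> rev x' <= rev x -> pi_val b t p Rr x' <= pi_val b t p Rr x.
Proof.
move=> p_gt0 /andP[Rr_gt0 Rr_lt1] c_ge0 le_time le_rev.
have pRr'_gt0 : 0 < p * (1 - Rr) by rewrite mulr_gt0 // subr_gt0.
rewrite !pi_val_trip; apply: ler_wpM2l; first by rewrite mulr_ge0 ?ltW.
rewrite -(ler_pM2l pRr'_gt0).
move: le_rev; rewrite !CV_rev_trip_time.
have : c * time x' <= c * time x by exact: ler_wpM2l.
lra.
Qed.

Lemma flow_balance_multiplier_sum (lam : 'I_L -> R) y : flow_balance b y ->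
  \sum_(i < L) \sum_(a < L) y i a *
    (\sum_(k < L) lam k * (qprob b a k - (k == i)%:R)) = 0.
Proof.
move=> fb_y.
have lamE i a : \sum_(k < L) lam k * (qprob b a k - (k == i)%:R)
    = \sum_(k < L) lam k * qprob b a k - lam i.
  under eq_bigr do rewrite mulrBr.
  rewrite sumrB; congr (_ - _).
  rewrite (bigD1 i) //= eqxx mulr1 big1 ?addr0 // => k /negbTE ->.
  by rewrite mulr0.
under eq_bigr do under eq_bigr do rewrite lamE mulrBr.
under eq_bigr do rewrite sumrB.
rewrite sumrB; apply/eqP; rewrite subr_eq0; apply/eqP.
under eq_bigr do under eq_bigr do rewrite mulr_sumr.
under eq_bigr do rewrite exchange_big.
rewrite exchange_big /=; apply: eq_bigr => k _.
rewrite -mulr_suml mulrC -fb_y mulr_sumr exchange_big /=; apply: eq_bigr => a _.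
by rewrite mulr_suml mulr_sumr; apply: eq_bigr => i _; rewrite mulrCA mulrA.
Qed.

Lemma stationarity_sum {x} {w lam : 'I_L -> R} {mu : 'I_L -> 'I_L -> R} {y} :
  (forall i a, N * rC b t p c Rr i a / rev x - tau_dr b t i a - w a
     + \sum_(k < L) lam k * (qprob b a k - (k == i)%:R) + mu i a = 0) ->
  flow_balance b y ->
  N / rev x * rev y - time y - \sum_(i < L) \sum_(a < L) w a * y i a
    + \sum_(i < L) \sum_(a < L) mu i a * y i a = 0.
Proof.
move=> stat fb_y.
have stat_y : \sum_(i < L) \sum_(a < L) y i a *
    (N * rC b t p c Rr i a / rev x - tau_dr b t i a - w a
     + \sum_(k < L) lam k * (qprob b a k - (k == i)%:R) + mu i a) = 0.
  by rewrite big1 // => i _; rewrite big1 // => a _; rewrite stat mulr0.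
rewrite -[LHS]addr0 -[X in _ + X = _](flow_balance_multiplier_sum lam y fb_y).
apply: etrans stat_y.
rewrite /CV_rev /CV_time mulr_sumr -!sumrB -!big_split /=; apply: eq_bigr => i _.
rewrite mulr_sumr -!sumrB -!big_split /=; apply: eq_bigr => a _.
rewrite /rC; ring.
Qed.

Section ZeroCapacityMultipliers.
Context {bC : 'I_L -> R} {x0 : 'I_L -> 'I_L -> R}.
Hypotheses (rev_x0_gt0 : 0 < rev x0)
  (kkt_x0 : capacity_multipliers b t p c Rr N bC x0 (fun _ => 0)).

Let stationarity_sum_zero_capacity : exists mu : 'I_L -> 'I_L -> R,
  [/\ forall i a, 0 <= mu i a, forall i a, mu i a * x0 i a = 0 &
  forall y, flow_balance b y ->
    N / rev x0 * rev y - time y + \sum_(i < L) \sum_(a < L) mu i a * y i a = 0].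
Proof.
case: kkt_x0 => lam [mu [mu_ge0 mu_x0 _ _ stat]].
exists mu; split=> // y fb_y; move: (stationarity_sum stat fb_y).
by rewrite [X in _ - X + _]big1 ?subr0 // => i _; rewrite big1 // => a _; rewrite mul0r.
Qed.

Lemma zero_capacity_multipliers_rev_le y :
  (forall i a, 0 <= y i a) -> flow_balance b y -> N * rev y <= rev x0 * time y.
Proof.
move=> y_ge0 fb_y; have [mu [mu_ge0 _ /(_ y fb_y) sum_y]] := stationarity_sum_zero_capacity.
have mu_y_ge0 : 0 <= \sum_(i < L) \sum_(a < L) mu i a * y i a.
  by apply: sumr_ge0 => i _; apply: sumr_ge0 => a _; rewrite mulr_ge0.
have : N / rev x0 * rev y <= time y by lra.
by rewrite -(ler_pM2l rev_x0_gt0) mulrA mulrCA divff ?gt_eqF // mulr1.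
Qed.

Lemma zero_capacity_multipliers_time : flow_balance b x0 -> time x0 = N.
Proof.
move=> fb_x0; have [mu [_ mu_x0 /(_ x0 fb_x0)]] := stationarity_sum_zero_capacity.
rewrite big1 => [|i _]; last by rewrite big1.
by rewrite addr0 mulfVK ?gt_eqF // => /eqP; rewrite subr_eq0 => /eqP.
Qed.

End ZeroCapacityMultipliers.

Section Optimality.
Hypothesis N_gt0 : 0 < N.

Lemma CV_optimal_time_le {bC x} : CV_optimal b t p c Rr N bC x -> time x <= N.
Proof.
case=> feas_x rev_x_gt0 opt_x; rewrite leNgt; apply/negP => lt_N_time.
have time_gt0 : 0 < time x by exact: lt_trans lt_N_time.
pose k := N / time x.
have k_gt0 : 0 < k by exact: divr_gt0.
have feas_kx : CV_feasible b bC (fun i a => k * x i a).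
  by apply: CV_feasible_scale => //; rewrite ltW //= ler_pdivrMr // mul1r ltW.
have rev_kx_gt0 : 0 < rev (fun i a => k * x i a).
  by rewrite CV_rev_scale mulr_gt0.
have := opt_x _ feas_kx rev_kx_gt0.
rewrite /CV_obj CV_rev_scale CV_time_scale mulfVK ?gt_eqF //.
rewrite lnM ?posrE // ln_div ?posrE // => le_obj.
have le_time : time x - N <= N * (ln (time x) - ln N) by lra.
by move: lt_N_time; rewrite (eq_of_subr_le_mul_lnB N_gt0 time_gt0 le_time) ltxx.
Qed.

Lemma CV_optimal_time_rev {bC x0 x} :
  CV_feasible b bC x0 -> 0 < rev x0 -> time x0 = N ->
  (forall y, (forall i a, 0 <= y i a) -> flow_balance b y ->
     N * rev y <= rev x0 * time y) ->
  CV_optimal b t p c Rr N bC x -> time x = N /\ rev x0 <= rev x.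
Proof.
move=> feas_x0 rev_x0_gt0 time_x0 ratio_x0 [feas_x rev_x_gt0 opt_x].
have := opt_x _ feas_x0 rev_x0_gt0; rewrite /CV_obj time_x0 => le_obj.
have [x_ge0 fb_x _] := feas_x.
have le_rev := ratio_x0 _ x_ge0 fb_x.
have time_gt0 : 0 < time x.
  by rewrite -(pmulr_rgt0 _ rev_x0_gt0); apply: lt_le_trans le_rev; rewrite mulr_gt0.
have le_ln : ln N + ln (rev x) <= ln (rev x0) + ln (time x).
  by rewrite -!lnM ?posrE // ler_ln ?posrE // ?mulr_gt0.
have time_x : time x = N.
  apply: eq_of_subr_le_mul_lnB => //.
  have : N * (ln N + ln (rev x)) <= N * (ln (rev x0) + ln (time x)).
    by rewrite ler_pM2l.
  lra.
split=> //; rewrite -ler_ln ?posrE // -(ler_pM2l N_gt0).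
by move: le_obj; rewrite time_x lerD2r.
Qed.

End Optimality.

End CVModel.

Theorem proposition3 (R : realType) (L : nat) (b t : 'I_L -> 'I_L -> R)
    (p c Rr N : R) (bC : 'I_L -> R) :
  (forall i j, 0 <= b i j) ->
  (forall i, 0 < brate b i) ->
  (forall i j, i != j -> 0 < t i j) ->
  (forall i, t i i = 0) ->
  0 < p -> 0 <= c -> 0 < Rr -> Rr < 1 -> 0 < N ->
  (forall i, 0 <= bC i <= brate b i) ->
  (exists x, CV_optimal b t p c Rr N bC x /\
             capacity_multipliers b t p c Rr N bC x (fun _ => 0)) ->
  forall b' : 'I_L -> R, (forall i, 0 <= b' i <= bC i) ->
  forall x' x, CV_optimal b t p c Rr N b' x' -> CV_optimal b t p c Rr N bC x ->
    pi_val b t p Rr x' <= pi_val b t p Rr x.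
Proof.
move=> _ _ _ _ p_gt0 c_ge0 Rr_gt0 Rr_lt1 N_gt0 _ [x0 [[feas_x0 rev_x0_gt0 _] kkt_x0]]
  b' _ x' x opt_x' opt_x.
have ratio_x0 := zero_capacity_multipliers_rev_le rev_x0_gt0 kkt_x0.
have time_x0 := zero_capacity_multipliers_time rev_x0_gt0 kkt_x0.
have [_ fb_x0 _] := feas_x0.
have [time_x le_rev_x] :=
  CV_optimal_time_rev N_gt0 feas_x0 rev_x0_gt0 (time_x0 fb_x0) ratio_x0 opt_x.
have time_x' := CV_optimal_time_le N_gt0 opt_x'.
have [[x'_ge0 fb_x' _] _ _] := opt_x'.
have le_rev_x' : CV_rev b t p c Rr x' <= CV_rev b t p c Rr x0.
  rewrite -(ler_pM2l N_gt0) [leRHS]mulrC; apply: le_trans (ratio_x0 _ x'_ge0 fb_x') _.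
  by apply: ler_wpM2l => //; exact: ltW.
apply: (pi_val_le p_gt0 _ c_ge0 _ (le_trans le_rev_x' le_rev_x)).
  by rewrite Rr_gt0.
by rewrite time_x.
Qed.
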